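(* The monoid $M := \langle x,y,z \mid (xy,\, yzx)\rangle$ is cancellative and BF, and $\rho(M) = 2$, but $M$ does not have accepted elasticity.
   Context: $M$ is the monoid with generators $x,y,z$ subject to the single relation $xy=yzx$; $\langle x,y,z\rangle$ is the free monoid on these letters. $|a|$ is word length; $a=_M b$ means equal images in $M$. $\mathsf{L}_M(a):=\{|b| : b\in\langle x,y,z\rangle,\ b=_M a\}$, $\mathcal{L}(M):=\{\mathsf{L}_M(a)\}$. $M$ is BF if every $\mathsf{L}_M(a)$ is finite; cancellative if $ab=ac$ or $ba=ca$ implies $b=c$. For $L\subseteq\mathbb{N}$, $\rho(L):=\sup(L\cap\mathbb{N}^+)/\min(L\cap\mathbb{N}^+)$ if $L\cap\mathbb{N}^+\ne\emptyset$, and $0$ otherwise; $\rho(M):=\sup\{\rho(L):L\in\mathcal{L}(M)\}$. $M$ has accepted elasticity if $\rho(M)=\rho(L)<\infty$ for some $L\in\mathcal{L}(M)$. *)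

From mathcomp Require Import all_boot all_order all_algebra.
From mathcomp Require Import all_classical all_reals ereal.
Set Implicit Arguments. Unset Strict Implicit. Unset Printing Implicit Defensive.
Import Order.TTheory GRing.Theory Num.Theory.
Local Open Scope classical_set_scope.
Local Open Scope ereal_scope.

Inductive letter := X | Y | Z.

Definition word := seq letter.

Inductive meq : word -> word -> Prop :=
| meq_step (u v : word) : meq (u ++ [:: X; Y] ++ v) (u ++ [:: Y; Z; X] ++ v)
| meq_refl (a : word) : meq a a
| meq_sym (a b : word) : meq a b -> meq b a
| meq_trans (a b c : word) : meq a b -> meq b c -> meq a c.

Definition LM (a : word) : set nat := [set n | exists b : word, meq b a /\ size b = n].

Definition LLM : set (set nat) := [set LM a | a in [set: word]].

Definition BF : Prop := forall a : word, finite_set (LM a).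

Definition cancellative : Prop :=
  forall a b c : word,
    (meq (a ++ b) (a ++ c) -> meq b c) /\ (meq (b ++ a) (c ++ a) -> meq b c).

Definition posPart (L : set nat) : set nat := [set n | L n /\ (0 < n)%N].

(* the minimum of a set of naturals (chosen classically; meaningful when nonempty) *)
Definition nmin (L : set nat) : nat := xget 0%N [set m | L m /\ forall k, L k -> (m <= k)%N].

Definition rho_set (R : realType) (L : set nat) : \bar R :=
  if `[< posPart L !=set0 >] then
    ereal_sup [set (n%:R)%:E | n in posPart L] * ((nmin (posPart L))%:R^-1)%:E
  else 0.

Definition rho_M (R : realType) : \bar R := ereal_sup [set rho_set R L | L in LLM].

Definition accepted_elasticity (R : realType) : Prop :=
  exists2 L, LLM L & rho_M R = rho_set R L /\ rho_M R < +oo.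

From mathcomp Require Import all_boot all_order all_algebra.
From mathcomp Require Import all_classical all_reals ereal.
From mathcomp Require Import zify ring.
Set Implicit Arguments. Unset Strict Implicit. Unset Printing Implicit Defensive.
Import Order.TTheory GRing.Theory Num.Theory.

(* Orienting the relation as xy -> yzx gives a terminating, confluent rewriting
   system whose normal forms contain no factor xy; they are computed by
   inserting the letters of a word from the right, an x being pushed past the
   leading y's of the normal form of the rest and leaving a z behind each.
   Prepending a letter is injective on normal forms, which gives left
   cancellativity; the anti-automorphism reversing words and swapping x and y
   gives right cancellativity.  Rewriting only lengthens words, so the normal
   form is the longest word of its class, and it is shorter than twice any
   nonempty word of the class; hence every length set is finite and every
   elasticity is < 2.  The numbers of x's and of y's are invariants, so the
   class of x y^n has minimal length n + 1 while its normal form has length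
   2n + 1, which forces rho(M) = 2. *)

Fixpoint pushX (v : word) : word :=
  match v with
  | Y :: v' => Y :: Z :: pushX v'
  | _ => X :: v
  end.

Definition consM (l : letter) (v : word) : word :=
  if l is X then pushX v else l :: v.

Fixpoint nf (w : word) : word :=
  if w is l :: w' then consM l (nf w') else [::].

Fixpoint leadY (v : word) : nat :=
  if v is Y :: v' then (leadY v').+1 else 0%N.

Lemma meq_catl p a b : meq a b -> meq (p ++ a) (p ++ b).
Proof.
elim=> [u v | c | c d _ IH | c d e _ IH1 _ IH2].
- by have := meq_step (p ++ u) v; rewrite -!catA.
- exact: meq_refl.
- exact: meq_sym.
- exact: meq_trans IH2.
Qed.

Lemma meq_pushX v : meq (X :: v) (pushX v).
Proof.
elim: v => [|[] v IH] /=; try exact: meq_refl.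
apply: meq_trans (meq_catl [:: Y; Z] IH).
exact: (meq_step [::] v).
Qed.

Lemma meq_nf w : meq w (nf w).
Proof.
elim: w => [|l w IH] /=; first exact: meq_refl.
apply: meq_trans (meq_catl [:: l] IH) _.
by case: l; [exact: meq_pushX | exact: meq_refl | exact: meq_refl].
Qed.

Lemma nf_cat u w : nf (u ++ w) = foldr consM (nf w) u.
Proof. by elim: u => //= l u ->. Qed.

Lemma meq_nf_eq a b : meq a b -> nf a = nf b.
Proof. by elim=> [u v | c | c d _ -> | c d e _ -> _ ->] //; rewrite !nf_cat. Qed.

Lemma meq_nfP a b : meq a b <-> nf a = nf b.
Proof.
split=> [|Eab]; first exact: meq_nf_eq.
by apply: meq_trans (meq_nf a) _; rewrite Eab; exact: meq_sym (meq_nf b).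
Qed.

Lemma pushX_inj : injective pushX.
Proof.
elim=> [|l v IH] [|l' w] //=; first by case: l'.
  by case: l.
case: l; case: l' => //= -[] E; try by rewrite E.
by rewrite (IH _ E).
Qed.

Lemma consM_inj l : injective (consM l).
Proof. by case: l => u v /=; [exact: pushX_inj | case | case]. Qed.

Lemma meq_catlI a b c : meq (a ++ b) (a ++ c) -> meq b c.
Proof.
rewrite !meq_nfP !nf_cat; elim: a => //= l a IH /consM_inj; exact: IH.
Qed.

Definition swapXY (l : letter) : letter :=
  match l with X => Y | Y => X | Z => Z end.

Definition mirror (w : word) : word := rev (map swapXY w).

Lemma mirror_cat a b : mirror (a ++ b) = mirror b ++ mirror a.
Proof. by rewrite /mirror map_cat rev_cat. Qed.

Lemma mirrorK : involutive mirror.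
Proof.
move=> w; rewrite /mirror map_rev revK -map_comp -[RHS]map_id.
by apply: eq_map => -[].
Qed.

Lemma meq_mirror a b : meq a b -> meq (mirror a) (mirror b).
Proof.
elim=> [u v | c | c d _ IH | c d e _ IH1 _ IH2].
- by rewrite !mirror_cat -!catA; exact: meq_step.
- exact: meq_refl.
- exact: meq_sym.
- exact: meq_trans IH2.
Qed.

Lemma meq_catrI a b c : meq (b ++ a) (c ++ a) -> meq b c.
Proof.
by move/meq_mirror; rewrite !mirror_cat => /meq_catlI /meq_mirror; rewrite !mirrorK.
Qed.

Lemma cancellative_M : cancellative.
Proof. by move=> a b c; split; [exact: meq_catlI | exact: meq_catrI]. Qed.

Lemma size_pushX v : size (pushX v) = (size v + leadY v + 1)%N.
Proof. elim: v => //= l v IH; case: l => //=; rewrite ?IH; lia. Qed.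

Lemma leadY_pushX v : (leadY (pushX v) <= 1)%N.
Proof. by case: v => //= -[]. Qed.

Lemma size_nf w : (size w <= size (nf w))%N.
Proof. elim: w => //= -[] w IH /=; rewrite ?size_pushX; lia. Qed.

Lemma BF_M : BF.
Proof.
move=> a; apply: (@sub_finite_set _ _ `I_(size (nf a)).+1); last exact: finite_II.
by move=> n [b [/meq_nf_eq <- <-]] /=; rewrite ltnS size_nf.
Qed.

(* The extra term [leadY] is what makes the induction go through: an x
   prepended to the normal form lengthens it by one plus its leading y's. *)
Lemma size_leadY_nf w : (size (nf w) + leadY (nf w) <= 2 * size w)%N.
Proof.
elim: w => //= -[] w IH /=; last 2 first; try lia.
by have := leadY_pushX (nf w); rewrite size_pushX; lia.
Qed.

Lemma size_nf_lt w : (0 < size w)%N -> (size (nf w) < 2 * size w)%N.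
Proof.
case: w => //= l w _; have := size_leadY_nf w.
by case: l => /=; rewrite ?size_pushX; lia.
Qed.

Lemma meq_size_lt b c : meq c b -> (0 < size b)%N -> (size c < 2 * size b)%N.
Proof.
move=> /meq_nf_eq Ecb /size_nf_lt; apply: leq_ltn_trans.
by rewrite -Ecb size_nf.
Qed.

Definition isX (l : letter) : bool := if l is X then true else false.
Definition isY (l : letter) : bool := if l is Y then true else false.

Lemma meq_count a b :
  meq a b -> count isX a = count isX b /\ count isY a = count isY b.
Proof.
elim=> [u v | c | c d _ [-> ->] | c d e _ [-> ->] _ [-> ->]] //.
by rewrite !count_cat /=; split; lia.
Qed.

Lemma meq_size_ge b c :
  meq c b -> (count isX b + count isY b <= size c)%N.
Proof.
case/meq_count=> <- <-; elim: c => //= l c; case: l => /=; lia.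
Qed.

Lemma size_nf_XYn n : size (nf (X :: nseq n Y)) = (2 * n + 1)%N.
Proof.
have nfYn : nf (nseq n Y) = nseq n Y by elim: (n) => //= k ->.
have leadYn : leadY (nseq n Y) = n by elim: (n) => //= k ->.
by rewrite /= nfYn size_pushX size_nseq leadYn; lia.
Qed.

Lemma meq_size_XYn n c : meq c (X :: nseq n Y) -> (n.+1 <= size c)%N.
Proof.
by move/meq_size_ge; rewrite /= !count_nseq /=; lia.
Qed.

Section Elasticity.
Variable R : realType.
Local Open Scope ring_scope.
Local Open Scope classical_set_scope.

Lemma nmin_eq (L : set nat) m :
  L m -> (forall k, L k -> (m <= k)%N) -> nmin L = m.
Proof.
move=> Lm m_min; rewrite /nmin.
have [|Lm' m'_min] := @xgetPex _ 0%N [set m | L m /\ forall k, L k -> (m <= k)%N].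
  by exists m.
by apply/eqP; rewrite eqn_leq m'_min //= m_min.
Qed.

Lemma nminP (L : set nat) n : L n -> L (nmin L) /\ forall k, L k -> (nmin L <= k)%N.
Proof.
move=> Ln; have exL : exists k, `[< L k >] by exists n; exact: asboolT.
case: (ex_minnP exL) => m /asboolP Lm m_min.
have {}m_min k : L k -> (m <= k)%N by move=> Lk; apply: m_min; exact: asboolT.
by rewrite (@nmin_eq L m).
Qed.

Lemma rho_set_lt (L : set nat) (r : nat) : (0 < r)%N ->
  (forall m n, L m -> L n -> (0 < m)%N -> (n < r * m)%N) -> (rho_set R L < r%:R%:E)%E.
Proof.
move=> r_gt0 Lbound; rewrite /rho_set.
case: (pselect (posPart L !=set0)) => [[n Pn]|P0]; last first.
  by rewrite asboolF // lte_fin ltr0n.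
rewrite asboolT; last by exists n.
have [[Lm m_gt0] _] := nminP Pn; set m := nmin _ in Lm m_gt0 *.
have sup_le : (ereal_sup [set (k%:R : R)%:E | k in posPart L] <= ((r * m - 1)%N%:R : R)%:E)%E.
  apply/ereal_supP => _ [k [Lk _] <-]; rewrite lee_fin ler_nat.
  by have := Lbound _ _ Lm Lk m_gt0; lia.
apply: le_lt_trans (lee_wpmul2r _ sup_le) _; first by rewrite lee_fin invr_ge0.
have m_gt0R : 0 < m%:R :> R by rewrite ltr0n.
by rewrite -EFinM lte_fin ltr_pdivrMr // -natrM ltr_nat; lia.
Qed.

Lemma rho_set_ge (L : set nat) m n : L m -> (0 < m)%N ->
  (forall k, L k -> (0 < k)%N -> (m <= k)%N) -> L n -> (0 < n)%N ->
  ((n%:R / m%:R)%:E <= rho_set R L)%E.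
Proof.
move=> Lm m_gt0 m_min Ln n_gt0; rewrite /rho_set asboolT; last by exists m.
rewrite (@nmin_eq _ m) //; last by move=> k [Lk k_gt0]; exact: m_min.
rewrite EFinM; apply: lee_wpmul2r; first by rewrite lee_fin invr_ge0.
by apply: ereal_sup_ubound; exists n.
Qed.

Lemma rho_LM_lt2 a : (rho_set R (LM a) < 2%:E)%E.
Proof.
apply: (@rho_set_lt _ 2) => // _ _ [b [ba <-]] [c [ca <-]].
exact/meq_size_lt/(meq_trans ca)/meq_sym.
Qed.

Lemma rho_LM_XYn_ge n : ((2 - n.+1%:R^-1)%:E <= rho_set R (LM (X :: nseq n Y)))%E.
Proof.
have -> : 2 - n.+1%:R^-1 = (2 * n + 1)%N%:R / n.+1%:R :> R.
  by rewrite natrD natrM -addn1 natrD; field.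
apply: rho_set_ge => //.
- by exists (X :: nseq n Y); split; [exact: meq_refl | rewrite /= size_nseq].
- by move=> _ [c [ca <-]] _; exact: meq_size_XYn.
- by exists (nf (X :: nseq n Y)); split; [exact/meq_sym/meq_nf | exact: size_nf_XYn].
- by rewrite addn1.
Qed.

Lemma ler_sub_invn (x y : R) : (forall k, y - k.+1%:R^-1 <= x) -> y <= x.
Proof.
move=> lb; rewrite leNgt; apply/negP => /ltr_add_invr [k].
by rewrite -ltrBrDr ltNge lb.
Qed.

Lemma rho_M_eq2 : rho_M R = 2%:E.
Proof.
have ub : (rho_M R <= 2%:E)%E.
  by apply/ereal_supP => _ [_ [a _ <-] <-]; exact/ltW/rho_LM_lt2.
have lb n : ((2 - n.+1%:R^-1)%:E <= rho_M R)%E.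
  apply: le_trans (rho_LM_XYn_ge n) _; apply: ereal_sup_ubound.
  by exists (LM (X :: nseq n Y)) => //; exists (X :: nseq n Y).
apply/eqP; rewrite eq_le ub /=.
case: (rho_M R) lb ub => [r | | ] lb ub //; last by have := lb 0%N.
by rewrite lee_fin; apply: ler_sub_invn => k; have := lb k; rewrite lee_fin.
Qed.

End Elasticity.

Theorem proposition6p3 (R : realType) :
  cancellative /\ BF /\ rho_M R = 2%:E /\ ~ accepted_elasticity R.
Proof.
split; first exact: cancellative_M.
split; first exact: BF_M.
split; first exact: rho_M_eq2.
move=> [_ [a _ <-] [rho_eq _]].
by have := rho_LM_lt2 R a; rewrite -rho_eq rho_M_eq2 ltxx.
Qed.
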